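(* Neither the class of all weakly connected frames nor the class of all transitive and weakly connected frames is spi-definable.
   Context: Unimodal setting: frames $(W,R)$ with one binary relation; sp-formulas built from propositional variables and $\top$ by $\wedge$ and $\Diamond$; sp-implications $\sigma\to\tau$, valid in a frame if at every point of every Kripke model over it $\sigma$ true implies $\tau$ true. A class $\mathcal C$ of frames is spi-definable if there is a set $\Sigma$ of sp-implications such that $\mathcal C$ is exactly the class of frames validating every member of $\Sigma$. $R$ is weakly connected if $\forall x,y,z\,(R(x,y)\wedge R(x,z)\to R(y,z)\vee R(z,y)\vee y=z)$. *)

Record frame := Frame { world : Type; acc : world -> world -> Prop }.

Inductive spform : Type :=
| SVar : nat -> spform
| STop : spform
| SAnd : spform -> spform -> spform
| SDia : spform -> spform.

Record spimpl := SPImpl { ante : spform; cons : spform }.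

Fixpoint sat (F : frame) (V : nat -> world F -> Prop) (x : world F) (s : spform) : Prop :=
  match s with
  | SVar p => V p x
  | STop => True
  | SAnd a b => sat F V x a /\ sat F V x b
  | SDia a => exists y, acc F x y /\ sat F V y a
  end.

Definition valid_in (F : frame) (i : spimpl) : Prop :=
  forall (V : nat -> world F -> Prop) (x : world F), sat F V x (ante i) -> sat F V x (cons i).

Definition spi_definable (C : frame -> Prop) : Prop :=
  exists Sigma : spimpl -> Prop,
    forall F : frame, C F <-> (forall i, Sigma i -> valid_in F i).

Definition transitive_frame (F : frame) : Prop :=
  forall x y z : world F, acc F x y -> acc F y z -> acc F x z.

Definition weakly_connected (F : frame) : Prop :=
  forall x y z : world F, acc F x y -> acc F x z ->
    acc F y z \/ acc F z y \/ y = z.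

(** The fork [X -> Y, X -> Z] is not weakly connected, yet it validates every
    sp-implication valid in three transitive, weakly connected frames on the
    same points: the two chains [X -> Y -> Z], [X -> Z -> Y] (with [X] seeing
    both) and the single edge [X -> Y].  Truth of an sp-formula is preserved
    by homomorphisms, so an antecedent true in the fork is true in the chains
    and, after collapsing [Z] onto [Y], in the edge frame.  There [Y] is a dead
    end, so a consequent true at [X] has modal depth at most 1, and such a
    formula only looks at [X] and its successors, which are the same in the
    fork and in a chain.  At the dead ends [Y], [Z] only diamond-free formulas
    hold, and they depend on the valuation alone. *)

From Stdlib Require Import Lia.

Fixpoint modal_depth (s : spform) : nat :=
  match s with
  | SVar _ | STop => 0
  | SAnd a b => Nat.max (modal_depth a) (modal_depth b)
  | SDia a => S (modal_depth a)
  end.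

Section Transfer.

Variables F G : frame.

Fixpoint height_le (n : nat) (x : world F) : Prop :=
  match n with
  | O => forall y, ~ acc F x y
  | S m => forall y, acc F x y -> height_le m y
  end.

Lemma modal_depth_le_of_sat (V : nat -> world F -> Prop) (s : spform) :
  forall n x, height_le n x -> sat F V x s -> modal_depth s <= n.
Proof.
  induction s as [p | | a IHa b IHb | a IHa]; intros n x Hn Hs; simpl in *.
  - lia.
  - lia.
  - destruct Hs as [Ha Hb].
    specialize (IHa n x Hn Ha). specialize (IHb n x Hn Hb). lia.
  - destruct Hs as [y [Hxy Hy]].
    destruct n as [| m]; simpl in Hn.
    + destruct (Hn y Hxy).
    + specialize (IHa m y (Hn y Hxy) Hy). lia.
Qed.

Variables (f : world F -> world G) (V : nat -> world F -> Prop)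
  (V' : nat -> world G -> Prop).

Fixpoint hom_upto (n : nat) (x : world F) : Prop :=
  (forall p, V p x -> V' p (f x)) /\
  match n with
  | O => True
  | S m => forall y, acc F x y -> acc G (f x) (f y) /\ hom_upto m y
  end.

Lemma sat_hom_upto (s : spform) :
  forall n x, hom_upto n x -> modal_depth s <= n -> sat F V x s -> sat G V' (f x) s.
Proof.
  induction s as [p | | a IHa b IHb | a IHa]; intros n x Hf Hn Hs; simpl in *.
  - destruct n; exact (proj1 Hf p Hs).
  - exact I.
  - destruct Hs as [Ha Hb]. split.
    + apply (IHa n); [exact Hf | lia | exact Ha].
    + apply (IHb n); [exact Hf | lia | exact Hb].
  - destruct Hs as [y [Hxy Hy]].
    destruct n as [| m]; [lia |].
    destruct (proj2 Hf y Hxy) as [Hfxy Hfy].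
    exists (f y). split; [exact Hfxy |].
    apply (IHa m); [exact Hfy | lia | exact Hy].
Qed.

Hypotheses (acc_hom : forall a b, acc F a b -> acc G (f a) (f b))
  (val_hom : forall p w, V p w -> V' p (f w)).

Lemma hom_upto_of_hom (n : nat) : forall x, hom_upto n x.
Proof.
  induction n as [| m IH]; intros x; simpl.
  - split; [intros p; apply val_hom | exact I].
  - split; [intros p; apply val_hom |].
    intros y Hxy. split; [apply acc_hom, Hxy | apply IH].
Qed.

Lemma sat_hom (s : spform) (x : world F) : sat F V x s -> sat G V' (f x) s.
Proof.
  apply (sat_hom_upto s (modal_depth s)); [apply hom_upto_of_hom | lia].
Qed.

End Transfer.

Lemma sat_dead_end (F G : frame) (V : nat -> world F -> Prop)
    (V' : nat -> world G -> Prop) (x : world F) (y : world G) (s : spform) :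
  (forall z, ~ acc F x z) -> (forall p, V p x -> V' p y) ->
  sat F V x s -> sat G V' y s.
Proof.
  intros Hdead HV Hs.
  apply (sat_hom_upto F G (fun _ => y) V V' s 0 x).
  - split; [exact HV | exact I].
  - exact (modal_depth_le_of_sat F V s 0 x Hdead Hs).
  - exact Hs.
Qed.

Lemma spi_definable_reflect (C : frame -> Prop) (G : frame) :
  spi_definable C ->
  (forall i, (forall F, C F -> valid_in F i) -> valid_in G i) -> C G.
Proof.
  intros [Sigma HSigma] Hreflect.
  apply HSigma. intros i Hi. apply Hreflect.
  intros F HF. exact (proj1 (HSigma F) HF i Hi).
Qed.

Inductive point := X | Y | Z.

Definition fork_rel (a b : point) : Prop :=
  match a, b with X, Y | X, Z => True | _, _ => False end.
Definition chain_YZ_rel (a b : point) : Prop :=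
  match a, b with X, Y | X, Z | Y, Z => True | _, _ => False end.
Definition chain_ZY_rel (a b : point) : Prop :=
  match a, b with X, Y | X, Z | Z, Y => True | _, _ => False end.
Definition edge_XY_rel (a b : point) : Prop :=
  match a, b with X, Y => True | _, _ => False end.

Definition fork := Frame point fork_rel.
Definition chain_YZ := Frame point chain_YZ_rel.
Definition chain_ZY := Frame point chain_ZY_rel.
Definition edge_XY := Frame point edge_XY_rel.

Definition collapse_Z (w : point) : point := match w with X => X | _ => Y end.

Lemma valid_in_fork (i : spimpl) :
  valid_in chain_YZ i -> valid_in chain_ZY i -> valid_in edge_XY i ->
  valid_in fork i.
Proof.
  intros HYZ HZY Hedge V x Hx.
  destruct x.
  - assert (Hcons_depth : modal_depth (cons i) <= 1).
    { apply (modal_depth_le_of_sat edge_XY (fun _ _ => True) (cons i) 1 X).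
      - intros [] Hy z Hz; simpl in *; tauto.
      - apply Hedge.
        refine (sat_hom fork edge_XY collapse_Z V (fun _ _ => True) _ _ (ante i) X Hx);
          [intros [] []; simpl; tauto | auto]. }
    assert (Hcons : sat chain_YZ V X (cons i)).
    { apply HYZ.
      refine (sat_hom fork chain_YZ (fun w => w) V V _ _ (ante i) X Hx);
        [intros [] []; simpl; tauto | auto]. }
    apply (sat_hom_upto chain_YZ fork (fun w => w) V V (cons i) 1 X);
      [| exact Hcons_depth | exact Hcons].
    simpl. split; [auto |].
    intros [] Hy; simpl in *; tauto.
  - apply (sat_dead_end chain_ZY fork V V Y Y); [intros []; simpl; tauto | auto |].
    apply HZY, (sat_dead_end fork chain_ZY V V Y Y); [intros []; simpl; tauto | auto |].
    exact Hx.
  - apply (sat_dead_end chain_YZ fork V V Z Z); [intros []; simpl; tauto | auto |].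
    apply HYZ, (sat_dead_end fork chain_YZ V V Z Z); [intros []; simpl; tauto | auto |].
    exact Hx.
Qed.

Lemma not_spi_definable_of_fork (C : frame -> Prop) :
  C chain_YZ -> C chain_ZY -> C edge_XY -> ~ C fork -> ~ spi_definable C.
Proof.
  intros HYZ HZY Hedge Hfork Hdef.
  apply Hfork, (spi_definable_reflect C fork Hdef).
  intros i Hi. apply valid_in_fork; apply Hi; assumption.
Qed.

Ltac decide_points :=
  unfold transitive_frame, weakly_connected; simpl;
  intros [] [] []; simpl; tauto.

Lemma fork_not_weakly_connected : ~ weakly_connected fork.
Proof.
  intros Hwc. destruct (Hwc X Y Z I I) as [H | [H | H]]; simpl in H;
    [contradiction | contradiction | discriminate].
Qed.

Lemma chain_YZ_transitive_weakly_connected :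
  transitive_frame chain_YZ /\ weakly_connected chain_YZ.
Proof. split; decide_points. Qed.

Lemma chain_ZY_transitive_weakly_connected :
  transitive_frame chain_ZY /\ weakly_connected chain_ZY.
Proof. split; decide_points. Qed.

Lemma edge_XY_transitive_weakly_connected :
  transitive_frame edge_XY /\ weakly_connected edge_XY.
Proof. split; decide_points. Qed.

Theorem proposition9p4 :
  ~ spi_definable weakly_connected /\
  ~ spi_definable (fun F => transitive_frame F /\ weakly_connected F).
Proof.
  pose proof chain_YZ_transitive_weakly_connected as HYZ.
  pose proof chain_ZY_transitive_weakly_connected as HZY.
  pose proof edge_XY_transitive_weakly_connected as Hedge.
  split; apply not_spi_definable_of_fork; try tauto.
  - exact fork_not_weakly_connected.
  - intros [_ Hwc]. exact (fork_not_weakly_connected Hwc).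
Qed.
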